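(* For every integer $t\ge1$, $$-\frac{1}{3t^2}<\frac{S_4(t)}{(-1)^t\binom{-3/2}{t}}-\frac{(-1)^t}{\binom{-3/2}{t}}\frac{\sinh\alpha}{\alpha}+\frac{\cosh\alpha}{2t}<\frac{13}{20t^2}.$$
   Context: $\alpha=\pi/6$. $(a)_m=a(a+1)\cdots(a+m-1)$ is the rising factorial ($(a)_0=1$); $\binom{x}{m}=x(x-1)\cdots(x-m+1)/m!$. For $t\ge0$, $$S_4(t)=\sum_{s=0}^t(-1)^s(1/2-s)_{s+1}\sum_{u=0}^s\frac{(-1)^u(-s)_u}{(s+u+1)!\,(2u)!}\left(\frac{\pi^2}{36}\right)^u.$$ *)

From Stdlib Require Import Reals Arith Factorial.
Open Scope R_scope.

Fixpoint rising (a : R) (m : nat) : R :=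
  match m with
  | O => 1
  | S k => rising a k * (a + INR k)
  end.

Fixpoint falling (x : R) (m : nat) : R :=
  match m with
  | O => 1
  | S k => falling x k * (x - INR k)
  end.

Definition gbinom (x : R) (m : nat) : R := falling x m / INR (fact m).

Definition alpha : R := PI / 6.

(* S_4(t) ; sum_f_R0 f n = f 0 + ... + f n *)
Definition S4 (t : nat) : R :=
  sum_f_R0 (fun s =>
    (-1) ^ s * rising (1/2 - INR s) (s + 1) *
    sum_f_R0 (fun u =>
      (-1) ^ u * rising (- INR s) u
        / (INR (fact (s + u + 1)) * INR (fact (2 * u)))
        * (PI ^ 2 / 36) ^ u) s) t.

(* Write c_s = (1/2)_s / s!, a_u = alpha^(2u) / (2u)! and
   w_u(s) = s! (s+1)! / ((s-u)! (s+u+1)! (s+1))   (zero for u > s).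
   Exchanging the summations gives S_4(t) = 1/2 sum_u a_u sum_{s<=t} c_s w_u(s).
   For each u the series sum_s c_s w_u(s) equals 2/(2u+1): Chu-Vandermonde yields a
   WZ certificate Q_u with c_s w_u(s) = c_s Q_u(s) - c_{s+1} Q_u(s+1), where Q_u is
   bounded and c_s -> 0.  As sum_u a_u/(2u+1) = sinh(alpha)/alpha, the defect
   sinh(alpha)/alpha - S_4(t) equals 1/2 sum_u a_u T_u(t+1) with the tails
   T_u(n) = sum_{s>=n} c_s w_u(s).  The bounds (1 - u(u+1)/(s+1))/(s+1) <= w_u(s)
   <= 1/(s+1) and telescoping sums of c_s give
       2 c_n - (2/3) u(u+1) c_n / n <= T_u(n) <= 2 c_n.
   Summing against a_u, with sum a_u = cosh(alpha) <= 23/20 and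
   sum u(u+1) a_u <= 63/200 (both from pi <= 68/21), squeezes the defect between
   c_{t+1} cosh(alpha) - (21/200) c_{t+1}/(t+1) and c_{t+1} cosh(alpha).  Since
   binom(-3/2, t) = (-1)^t (2t+2) c_{t+1}, the theorem becomes an elementary
   inequality in t. *)

From Stdlib Require Import Reals Lra Lia Arith Factorial.
Open Scope R_scope.

(* [fsum f n] is the finite sum f 0 + ... + f (n-1); unlike [sum_f_R0] it has
   exactly n terms, which makes splitting and telescoping arguments clean. *)
Fixpoint fsum (f : nat -> R) (n : nat) : R :=
  match n with O => 0 | S m => fsum f m + f m end.

Lemma sum_f_R0_fsum (f : nat -> R) (n : nat) : sum_f_R0 f n = fsum f (S n).
Proof.
  induction n as [|n IH]; [simpl; lra|].
  change (sum_f_R0 f (S n)) with (sum_f_R0 f n + f (S n)).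
  rewrite IH. reflexivity.
Qed.

Lemma fsum_ext (f g : nat -> R) (n : nat) :
  (forall k, (k < n)%nat -> f k = g k) -> fsum f n = fsum g n.
Proof.
  induction n as [|n IH]; simpl; intros H; auto.
  rewrite IH by (intros; apply H; lia). rewrite H by lia. reflexivity.
Qed.

Lemma fsum_zero (n : nat) : fsum (fun _ => 0) n = 0.
Proof. induction n as [|n IH]; simpl; lra. Qed.

Lemma fsum_plus (f g : nat -> R) (n : nat) :
  fsum (fun k => f k + g k) n = fsum f n + fsum g n.
Proof. induction n as [|n IH]; simpl; lra. Qed.

Lemma fsum_minus (f g : nat -> R) (n : nat) :
  fsum (fun k => f k - g k) n = fsum f n - fsum g n.
Proof. induction n as [|n IH]; simpl; lra. Qed.

Lemma fsum_scal (c : R) (f : nat -> R) (n : nat) :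
  fsum (fun k => c * f k) n = c * fsum f n.
Proof. induction n as [|n IH]; simpl; lra. Qed.

Lemma fsum_shift (f : nat -> R) (n : nat) :
  fsum f (S n) = f O + fsum (fun k => f (S k)) n.
Proof. induction n as [|n IH]; simpl in *; lra. Qed.

Lemma fsum_split (f : nat -> R) (n m : nat) :
  fsum f (n + m) = fsum f n + fsum (fun i => f (n + i)%nat) m.
Proof.
  induction m as [|m IH]; simpl.
  - rewrite Nat.add_0_r. lra.
  - rewrite Nat.add_succ_r. simpl. lra.
Qed.

Lemma fsum_le (f g : nat -> R) (n : nat) :
  (forall k, (k < n)%nat -> f k <= g k) -> fsum f n <= fsum g n.
Proof.
  induction n as [|n IH]; simpl; intros H; [lra|].
  assert (f n <= g n) by (apply H; lia).
  assert (fsum f n <= fsum g n) by (apply IH; intros; apply H; lia).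
  lra.
Qed.

Lemma fsum_nonneg (f : nat -> R) (n : nat) :
  (forall k, (k < n)%nat -> 0 <= f k) -> 0 <= fsum f n.
Proof. intros H. rewrite <- (fsum_zero n). apply fsum_le. exact H. Qed.

Lemma fsum_abs (f : nat -> R) (n : nat) :
  Rabs (fsum f n) <= fsum (fun k => Rabs (f k)) n.
Proof.
  induction n as [|n IH]; simpl; [rewrite Rabs_R0; lra|].
  eapply Rle_trans; [apply Rabs_triang|lra].
Qed.

Lemma fsum_swap (f : nat -> nat -> R) (n m : nat) :
  fsum (fun s => fsum (fun u => f s u) m) n = fsum (fun u => fsum (fun s => f s u) n) m.
Proof.
  induction n as [|n IH]; simpl.
  - symmetry. apply fsum_zero.
  - rewrite IH, <- fsum_plus. reflexivity.
Qed.

Lemma fsum_telescope (F : nat -> R) (n m : nat) :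
  fsum (fun i => F (n + i)%nat - F (S (n + i))) m = F n - F (n + m)%nat.
Proof.
  induction m as [|m IH]; simpl.
  - rewrite Nat.add_0_r. ring.
  - rewrite IH, Nat.add_succ_r. ring.
Qed.

Lemma fsum_pairs (f : nat -> R) (N : nat) :
  fsum f (2 * N) = fsum (fun u => f (2 * u)%nat + f (S (2 * u))) N.
Proof.
  induction N as [|N IH]; [reflexivity|].
  replace (2 * S N)%nat with (S (S (2 * N))) by lia.
  change (fsum f (S (S (2 * N)))) with (fsum f (2 * N) + f (2 * N)%nat + f (S (2 * N))).
  rewrite IH. simpl. ring.
Qed.

Lemma fsum_extend_zero (f : nat -> R) (n N : nat) : (n <= N)%nat ->
  (forall k, (n <= k)%nat -> f k = 0) -> fsum f n = fsum f N.
Proof.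
  intros HnN Hz. replace N with (n + (N - n))%nat by lia.
  rewrite fsum_split, (fsum_ext (fun i => f (n + i)%nat) (fun _ => 0)), fsum_zero;
    [ring|].
  intros k _. apply Hz. lia.
Qed.

Lemma rising_front (a : R) (m : nat) : rising a (S m) = a * rising (a + 1) m.
Proof.
  induction m as [|m IH]; [simpl; ring|].
  change (rising a (S (S m))) with (rising a (S m) * (a + INR (S m))).
  change (rising (a + 1) (S m)) with (rising (a + 1) m * (a + 1 + INR m)).
  rewrite IH, S_INR. ring.
Qed.

Lemma rising_pos (a : R) (m : nat) : 0 < a -> 0 < rising a m.
Proof.
  intros Ha. induction m as [|m IH]; simpl; [lra|].
  pose proof (pos_INR m). apply Rmult_lt_0_compat; lra.
Qed.

Lemma rising_ge1 (a : R) (m : nat) : 1 <= a -> 1 <= rising a m.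
Proof. intros Ha. induction m as [|m IH]; simpl; [lra|]. pose proof (pos_INR m). nra. Qed.

Lemma rising_neg_int (m u : nat) : (m < u)%nat -> rising (- INR m) u = 0.
Proof.
  induction u as [|u IH]; intros H; [lia|]. simpl.
  destruct (Nat.eq_dec m u) as [->|Hne]; [ring|]. rewrite IH by lia. ring.
Qed.

Lemma rising_one (u : nat) : rising 1 u = INR (fact u).
Proof.
  induction u as [|u IH]; [reflexivity|].
  change (rising 1 (S u)) with (rising 1 u * (1 + INR u)).
  rewrite IH, fact_simpl, mult_INR, S_INR. ring.
Qed.

Fixpoint binomR (n k : nat) : R :=
  match n, k with
  | _, O => 1
  | O, S _ => 0
  | S n', S k' => binomR n' k' + binomR n' (S k')
  end.

Lemma binomR_0 (n : nat) : binomR n 0 = 1.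
Proof. destruct n; reflexivity. Qed.

Lemma binomR_gt (n k : nat) : (n < k)%nat -> binomR n k = 0.
Proof.
  revert k; induction n as [|n IH]; intros k H; destruct k; try lia; simpl; auto.
  rewrite !IH by lia. lra.
Qed.

Lemma binomR_nonneg (n k : nat) : 0 <= binomR n k.
Proof.
  revert k; induction n as [|n IH]; intros k; destruct k; simpl; try lra.
  pose proof (IH k); pose proof (IH (S k)); lra.
Qed.

(* Chu–Vandermonde: sum_k (-1)^k C(n,k) (b)_k/(c)_k = (c-b)_n/(c)_n for c > 0,
   by induction on n using Pascal's rule, which shifts (b, c) to (b+1, c+1). *)
Lemma chu_vandermonde (n : nat) : forall b c, 0 < c ->
  fsum (fun k => (-1) ^ k * binomR n k * rising b k / rising c k) (S n)
  = rising (c - b) n / rising c n.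
Proof.
  induction n as [|n IH]; intros b c Hc; [simpl; field|].
  set (g := fun k => (-1) ^ k * binomR n k * rising b k / rising c k).
  set (h := fun k => (-1) ^ k * binomR n k * rising (b + 1) k / rising (c + 1) k).
  assert (Hc1 : 0 < c + 1) by lra.
  assert (Pascal : fsum (fun k => (-1) ^ k * binomR (S n) k * rising b k / rising c k) (S (S n))
                   = 1 + (- (b / c) * fsum h (S n) + fsum (fun k => g (S k)) (S n))).
  { rewrite fsum_shift. simpl ((-1) ^ 0).
    replace (1 * binomR (S n) 0 * rising b 0 / rising c 0) with 1 by (simpl; field).
    f_equal. rewrite <- fsum_scal, <- fsum_plus. apply fsum_ext. intros k _.
    unfold g, h. rewrite !rising_front. simpl binomR. simpl pow.
    pose proof (rising_pos c (S k) Hc) as P1. rewrite rising_front in P1.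
    pose proof (rising_pos (c + 1) k Hc1).
    field. split; intro Z; rewrite Z in P1; lra. }
  assert (Shift : fsum (fun k => g (S k)) (S n) = fsum g (S n) - 1).
  { pose proof (fsum_shift g (S n)) as H.
    change (fsum g (S (S n))) with (fsum g (S n) + g (S n)) in H.
    assert (g (S n) = 0) by (unfold g; rewrite binomR_gt by lia; lra).
    assert (g O = 1) by (unfold g; rewrite binomR_0; simpl; field). lra. }
  rewrite Pascal, Shift. unfold h, g. rewrite (IH b c Hc), (IH (b + 1) (c + 1) Hc1).
  replace (c + 1 - (b + 1)) with (c - b) by ring.
  change (rising (c - b) (S n)) with (rising (c - b) n * (c - b + INR n)).
  change (rising c (S n)) with (rising c n * (c + INR n)).
  assert (Front : rising c n * (c + INR n) = c * rising (c + 1) n)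
    by (rewrite <- rising_front; reflexivity).
  pose proof (rising_pos (c + 1) n Hc1). pose proof (pos_INR n).
  assert (rising c n = c * rising (c + 1) n / (c + INR n)) by (rewrite <- Front; field; lra).
  rewrite H1. field. repeat split; lra.
Qed.
(* The central coefficients c_s = (1/2)_s / s! = C(2s,s)/4^s. *)
Fixpoint central (s : nat) : R :=
  match s with O => 1 | S m => central m * (2 * INR m + 1) / (2 * INR m + 2) end.

Lemma central_S (s : nat) : central (S s) = central s * (2 * INR s + 1) / (2 * INR s + 2).
Proof. reflexivity. Qed.

Lemma central_pos (s : nat) : 0 < central s.
Proof.
  induction s as [|s IH]; simpl; [lra|]. pose proof (pos_INR s).
  apply Rmult_lt_0_compat; [apply Rmult_lt_0_compat|apply Rinv_0_lt_compat]; lra.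
Qed.

Lemma central_rising (s : nat) : rising (1/2) s = central s * INR (fact s).
Proof.
  induction s as [|s IH]; [simpl; lra|].
  change (rising (1/2) (S s)) with (rising (1/2) s * (1/2 + INR s)).
  rewrite IH, central_S, fact_simpl, mult_INR, S_INR. pose proof (pos_INR s). field. lra.
Qed.

(* Wallis-type bound c_s^2 (2s+1) <= 1, which forces c_s -> 0. *)
Lemma central_sq_bound (s : nat) : central s ^ 2 * (2 * INR s + 1) <= 1.
Proof.
  induction s as [|s IH]; [simpl; lra|].
  rewrite central_S, S_INR. pose proof (pos_INR s). pose proof (central_pos s).
  set (q := (2 * INR s + 1) / (2 * INR s + 2)).
  assert (Hq : q * (2 * INR s + 2) = 2 * INR s + 1) by (unfold q; field; lra).
  assert (0 <= q) by (unfold q; apply Rmult_le_pos; [lra|left; apply Rinv_0_lt_compat; lra]).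
  assert (Step : q ^ 2 * (2 * (INR s + 1) + 1) <= 2 * INR s + 1).
  { assert (q * q * (2 * INR s + 2) ^ 2 = (2 * INR s + 1) ^ 2) by (rewrite <- Hq; ring). nra. }
  replace ((central s * (2 * INR s + 1) / (2 * INR s + 2)) ^ 2 * (2 * (INR s + 1) + 1))
    with (central s ^ 2 * (q ^ 2 * (2 * (INR s + 1) + 1))) by (unfold q; field; lra).
  apply Rle_trans with (central s ^ 2 * (2 * INR s + 1)); [|exact IH].
  apply Rmult_le_compat_l; [apply pow2_ge_0|exact Step].
Qed.

Lemma central_small (eps : R) : 0 < eps ->
  exists N, forall M, (N <= M)%nat -> central M < eps.
Proof.
  intros He. destruct (archimed_cor1 (eps * eps)) as [N [HN HN0]]; [nra|].
  exists N. intros M HM.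
  pose proof (central_sq_bound M). pose proof (central_pos M).
  assert (HNM : INR N <= 2 * INR M + 1)
    by (apply le_INR in HM; pose proof (pos_INR M); lra).
  assert (HN' : 0 < INR N) by (apply lt_0_INR; lia).
  assert (1 < eps * eps * INR N).
  { apply Rmult_lt_reg_r with (/ INR N); [apply Rinv_0_lt_compat; lra|].
    rewrite Rmult_assoc, Rinv_r, Rmult_1_l, Rmult_1_r by lra. exact HN. }
  destruct (Rlt_le_dec (central M) eps) as [|Hc]; auto.
  exfalso. assert (eps * eps <= central M ^ 2) by nra. nra.
Qed.

Lemma le_up_to_central (X Y C : R) (N0 : nat) : 0 <= C ->
  (forall M, (N0 <= M)%nat -> X <= Y + C * central M) -> X <= Y.
Proof.
  intros HC H. apply Rle_plus_epsilon. intros e He.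
  destruct (central_small (e / (C + 1))) as [N HN]; [apply Rdiv_lt_0_compat; lra|].
  specialize (H (N0 + N)%nat ltac:(lia)). specialize (HN (N0 + N)%nat ltac:(lia)).
  pose proof (central_pos (N0 + N)).
  assert (C * central (N0 + N) <= e).
  { apply Rle_trans with ((C + 1) * central (N0 + N)); [nra|].
    apply Rmult_le_reg_r with (/ (C + 1)); [apply Rinv_0_lt_compat; lra|].
    replace ((C + 1) * central (N0 + N) * / (C + 1)) with (central (N0 + N)) by (field; lra).
    lra. }
  lra.
Qed.

Lemma central_telescope (s : nat) : central s / (INR s + 1) = 2 * (central s - central (S s)).
Proof. rewrite central_S. pose proof (pos_INR s). field. lra. Qed.

Lemma sum_central_first (n m : nat) :
  fsum (fun i => central (n + i) / (INR (n + i) + 1)) m = 2 * (central n - central (n + m)).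
Proof.
  rewrite (fsum_ext _ (fun i => 2 * (central (n + i) - central (S (n + i))))).
  - rewrite fsum_scal, (fsum_telescope central). reflexivity.
  - intros. apply central_telescope.
Qed.

(* sum_{s >= n} c_s/(s+1)^2 <= 2 c_n / (3n), comparing with the telescoping
   differences of c_s/s. *)
Lemma sum_central_second (n m : nat) : (1 <= n)%nat ->
  fsum (fun i => central (n + i) / (INR (n + i) + 1) ^ 2) m <= 2/3 * (central n / INR n).
Proof.
  intros Hn. set (F := fun j => central j / INR j).
  apply Rle_trans with (fsum (fun i => 2/3 * (F (n + i)%nat - F (S (n + i)))) m).
  - apply fsum_le. intros i _. unfold F. rewrite central_S, S_INR.
    assert (1 <= INR (n + i)) by (apply (le_INR 1); lia).
    pose proof (central_pos (n + i)).
    set (s := INR (n + i)) in *. set (c := central (n + i)) in *.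
    replace (2 / 3 * (c / s - c * (2 * s + 1) / (2 * s + 2) / (s + 1)))
      with (c / (s + 1) ^ 2 + c * 2 / (3 * s * (s + 1) ^ 2)) by (field; lra).
    assert (0 <= c * 2 / (3 * s * (s + 1) ^ 2)).
    { apply Rmult_le_pos; [lra|]. left. apply Rinv_0_lt_compat.
      apply Rmult_lt_0_compat; [lra|apply pow_lt; lra]. }
    lra.
  - rewrite fsum_scal, fsum_telescope. apply Rmult_le_compat_l; [lra|].
    assert (0 < INR (n + m)) by (apply lt_0_INR; lia). pose proof (central_pos (n + m)).
    assert (0 <= F (n + m)%nat)
      by (apply Rmult_le_pos; [lra|left; apply Rinv_0_lt_compat; lra]).
    unfold F in *. lra.
Qed.
(* hratio u s = (s+1-u)_u / (s+2)_u = s! (s+1)! / ((s-u)! (s+u+1)!), which is 0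
   for u > s, and the weight w_u(s) = hratio u s / (s+1). *)
Definition hratio (u s : nat) : R := rising (INR s + 1 - INR u) u / rising (INR s + 2) u.
Definition weight (u s : nat) : R := hratio u s / (INR s + 1).

Lemma hratio_S (u s : nat) :
  hratio (S u) s = hratio u s * (INR s - INR u) / (INR s + INR u + 2).
Proof.
  unfold hratio. rewrite rising_front, S_INR.
  change (rising (INR s + 2) (S u)) with (rising (INR s + 2) u * (INR s + 2 + INR u)).
  replace (INR s + 1 - (INR u + 1) + 1) with (INR s + 1 - INR u) by ring.
  pose proof (pos_INR s). pose proof (pos_INR u).
  pose proof (rising_pos (INR s + 2) u ltac:(lra)). field. lra.
Qed.

Lemma hratio_zero (u s : nat) : (s < u)%nat -> hratio u s = 0.
Proof.
  intros H. unfold hratio.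
  replace (INR s + 1 - INR u) with (- INR (u - s - 1)) by (rewrite !minus_INR by lia; simpl; lra).
  rewrite rising_neg_int by lia. lra.
Qed.

Lemma weight_zero (u s : nat) : (s < u)%nat -> weight u s = 0.
Proof. intros H. unfold weight. rewrite hratio_zero by exact H. unfold Rdiv. ring. Qed.

Lemma hratio_bounds_le (u s : nat) : (u <= s)%nat ->
  0 <= hratio u s <= 1 /\ 1 - INR u * (INR u + 1) / (INR s + 1) <= hratio u s.
Proof.
  induction u as [|u IH]; intros H.
  - unfold hratio. simpl. unfold Rdiv. rewrite Rmult_0_l. lra.
  - destruct (IH ltac:(lia)) as [[A B] C]. rewrite hratio_S, S_INR.
    assert (Hu : INR u + 1 <= INR s) by (rewrite <- S_INR; apply le_INR; lia).
    pose proof (pos_INR u).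
    set (f := (INR s - INR u) / (INR s + INR u + 2)).
    assert (Hf : f * (INR s + INR u + 2) = INR s - INR u) by (unfold f; field; lra).
    assert (0 <= f <= 1) by (split; nra).
    assert (1 - f <= (2 * INR u + 2) / (INR s + 1)).
    { apply Rmult_le_reg_r with (INR s + 1); [lra|].
      unfold Rdiv. rewrite Rmult_assoc, Rinv_l by lra. nra. }
    replace (hratio u s * (INR s - INR u) / (INR s + INR u + 2)) with (hratio u s * f)
      by (unfold f; field; lra).
    split; [split; nra|].
    assert ((INR u + 1) * (INR u + 1 + 1) / (INR s + 1)
            = INR u * (INR u + 1) / (INR s + 1) + (2 * INR u + 2) / (INR s + 1)) by (field; lra).
    nra.
Qed.

Lemma hratio_bounds (u s : nat) :
  0 <= hratio u s <= 1 /\ 1 - INR u * (INR u + 1) / (INR s + 1) <= hratio u s.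
Proof.
  destruct (le_lt_dec u s) as [Hle|Hlt]; [apply hratio_bounds_le; exact Hle|].
  rewrite hratio_zero by exact Hlt. pose proof (pos_INR s).
  assert (INR s + 1 <= INR u) by (rewrite <- S_INR; apply le_INR; lia).
  assert (INR u * (INR u + 1) / (INR s + 1) >= 1).
  { apply Rle_ge, Rmult_le_reg_r with (INR s + 1); [lra|].
    unfold Rdiv. rewrite Rmult_assoc, Rinv_l by lra. nra. }
  lra.
Qed.

Lemma central_weight_upper (u s : nat) :
  central s * weight u s <= central s / (INR s + 1).
Proof.
  unfold weight. destruct (hratio_bounds u s) as [[H0 H1] _].
  pose proof (central_pos s). pose proof (pos_INR s).
  unfold Rdiv. rewrite <- Rmult_assoc.
  apply Rmult_le_compat_r; [left; apply Rinv_0_lt_compat; lra|nra].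
Qed.

Lemma central_weight_lower (u s : nat) :
  central s / (INR s + 1) - INR u * (INR u + 1) * (central s / (INR s + 1) ^ 2)
  <= central s * weight u s.
Proof.
  unfold weight. destruct (hratio_bounds u s) as [_ H].
  pose proof (central_pos s). pose proof (pos_INR s).
  replace (central s / (INR s + 1) - INR u * (INR u + 1) * (central s / (INR s + 1) ^ 2))
    with (central s * (1 - INR u * (INR u + 1) / (INR s + 1)) / (INR s + 1)) by (field; lra).
  unfold Rdiv. rewrite <- !Rmult_assoc.
  apply Rmult_le_compat_r; [left; apply Rinv_0_lt_compat; lra|].
  apply Rmult_le_compat_l; lra.
Qed.
(* The WZ certificate
     Q_u(n) = 2 sum_{k<=u} (-1)^k C(u,k) (u+1)_k / ((2k+1) (n+1)_k),
   for which c_n w_u(n) = c_n Q_u(n) - c_{n+1} Q_u(n+1). *)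
Definition wz_cert (u n : nat) : R :=
  2 * fsum (fun k => (-1) ^ k * binomR u k * rising (INR u + 1) k
                     / ((2 * INR k + 1) * rising (INR n + 1) k)) (S u).

(* Chu–Vandermonde evaluates the difference Q_u(n) - (2n+1)/(2n+2) Q_u(n+1). *)
Lemma wz_step (u n : nat) :
  weight u n = wz_cert u n - (2 * INR n + 1) / (2 * INR n + 2) * wz_cert u (S n).
Proof.
  unfold wz_cert. rewrite S_INR.
  match goal with |- _ = 2 * fsum ?f ?m - ?a * (2 * fsum ?g ?m) =>
    replace (2 * fsum f m - a * (2 * fsum g m)) with (fsum (fun k => 2 * f k + (- a * 2) * g k) m)
      by (rewrite fsum_plus, !fsum_scal; ring) end.
  transitivity (fsum (fun k => / (INR n + 1) *
    ((-1) ^ k * binomR u k * rising (INR u + 1) k / rising (INR n + 2) k)) (S u)).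
  2: { apply fsum_ext. intros k _. pose proof (pos_INR n). pose proof (pos_INR k).
       assert (X : rising (INR n + 1) (S k) = rising (INR n + 1) k * (INR n + 1 + INR k))
         by reflexivity.
       rewrite rising_front in X. replace (INR n + 1 + 1) with (INR n + 2) in X by ring.
       replace (INR n + 1 + 1) with (INR n + 2) by ring.
       pose proof (rising_pos (INR n + 2) k ltac:(lra)).
       assert (rising (INR n + 1) k = (INR n + 1) * rising (INR n + 2) k / (INR n + 1 + INR k))
         by (rewrite X; field; lra).
       rewrite H2. field. repeat split; lra. }
  rewrite fsum_scal, chu_vandermonde by (pose proof (pos_INR n); lra).
  unfold weight, hratio. replace (INR n + 2 - (INR u + 1)) with (INR n + 1 - INR u) by ring.
  pose proof (pos_INR n). pose proof (rising_pos (INR n + 2) u ltac:(lra)). field. lra.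
Qed.

Lemma central_weight_telescope (u n : nat) :
  central n * weight u n = central n * wz_cert u n - central (S n) * wz_cert u (S n).
Proof. rewrite wz_step, central_S. pose proof (pos_INR n). field. lra. Qed.

(* Initial value c_u Q_u(u) = 2/(2u+1), again by Chu–Vandermonde (b = 1/2, c = 3/2). *)
Lemma wz_cert_diagonal (u : nat) : central u * wz_cert u u = 2 / (2 * INR u + 1).
Proof.
  assert (R32 : forall k, rising (3/2) k = rising (1/2) k * (2 * INR k + 1)).
  { intros k. assert (E : rising (1/2) k * (1/2 + INR k) = 1/2 * rising (1/2 + 1) k)
      by (rewrite <- rising_front; reflexivity).
    replace (1/2 + 1) with (3/2) in E by field. lra. }
  unfold wz_cert.
  rewrite (fsum_ext _ (fun k => (-1) ^ k * binomR u k * rising (1/2) k / rising (3/2) k)).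
  2: { intros k _. pose proof (pos_INR k). pose proof (pos_INR u).
       pose proof (rising_pos (INR u + 1) k ltac:(lra)). pose proof (rising_pos (1/2) k ltac:(lra)).
       rewrite R32. field. repeat split; lra. }
  rewrite chu_vandermonde by lra. replace (3/2 - 1/2) with 1 by field.
  rewrite rising_one, R32, central_rising.
  pose proof (INR_fact_lt_0 u). pose proof (central_pos u). pose proof (pos_INR u).
  field. repeat split; lra.
Qed.

Definition wz_cert_bound (u : nat) : R :=
  2 * fsum (fun k => binomR u k * rising (INR u + 1) k) (S u).

(* K_u >= 0 and |Q_u(n)| <= K_u, as (n+1)_k >= 1. *)
Lemma wz_cert_bound_nonneg (u : nat) : 0 <= wz_cert_bound u.
Proof.
  unfold wz_cert_bound. apply Rmult_le_pos; [lra|]. apply fsum_nonneg. intros k _.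
  apply Rmult_le_pos; [apply binomR_nonneg|]. left. apply rising_pos.
  pose proof (pos_INR u). lra.
Qed.

Lemma wz_cert_bounded (u n : nat) : Rabs (wz_cert u n) <= wz_cert_bound u.
Proof.
  unfold wz_cert, wz_cert_bound. rewrite Rabs_mult, (Rabs_right 2) by lra.
  apply Rmult_le_compat_l; [lra|].
  eapply Rle_trans; [apply fsum_abs|]. apply fsum_le. intros k _.
  pose proof (pos_INR k). pose proof (pos_INR n). pose proof (pos_INR u).
  pose proof (rising_ge1 (INR n + 1) k ltac:(lra)).
  pose proof (rising_pos (INR u + 1) k ltac:(lra)). pose proof (binomR_nonneg u k).
  assert (Hden : 1 <= (2 * INR k + 1) * rising (INR n + 1) k) by nra.
  unfold Rdiv. rewrite !Rabs_mult, pow_1_abs, Rmult_1_l.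
  rewrite (Rabs_right (binomR u k)), (Rabs_right (rising _ k)) by lra.
  rewrite Rabs_right
    by (left; apply Rinv_0_lt_compat, Rmult_lt_0_compat; lra).
  rewrite <- (Rmult_1_r (binomR u k * rising (INR u + 1) k)) at 2.
  apply Rmult_le_compat_l; [apply Rmult_le_pos; lra|].
  apply (Rinv_le_contravar 1) in Hden; [rewrite Rinv_1 in Hden; exact Hden|lra].
Qed.

(* Partial sums A_u(n) = sum_{s<n} c_s w_u(s) and tails T_u(n) = 2/(2u+1) - A_u(n);
   the telescoping identity shows A_u(n) -> 2/(2u+1), i.e. T_u(n) is the true tail. *)
Definition weighted_sum (u n : nat) : R := fsum (fun s => central s * weight u s) n.
Definition weighted_tail (u n : nat) : R := 2 / (2 * INR u + 1) - weighted_sum u n.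

(* Closed form A_u(u+m) = 2/(2u+1) - c_{u+m} Q_u(u+m), telescoping from
   A_u(u) = 0 (as w_u(s) = 0 for s < u). *)
Lemma weighted_sum_closed (u m : nat) :
  weighted_sum u (u + m) = 2 / (2 * INR u + 1) - central (u + m) * wz_cert u (u + m).
Proof.
  unfold weighted_sum. rewrite fsum_split.
  rewrite (fsum_ext (fun s => central s * weight u s) (fun _ => 0)), fsum_zero
    by (intros k Hk; rewrite weight_zero by lia; ring).
  set (F := fun j => central j * wz_cert u j).
  rewrite (fsum_ext _ (fun i => F (u + i)%nat - F (S (u + i))))
    by (intros; apply central_weight_telescope).
  rewrite fsum_telescope. unfold F. rewrite wz_cert_diagonal. ring.
Qed.

Lemma weighted_tail_split (u n m : nat) : (u <= n + m)%nat ->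
  weighted_tail u n = central (n + m) * wz_cert u (n + m)
                      + fsum (fun i => central (n + i) * weight u (n + i)) m.
Proof.
  intros H. unfold weighted_tail.
  pose proof (fsum_split (fun s => central s * weight u s) n m) as Hs.
  fold (weighted_sum u (n + m)) (weighted_sum u n) in Hs.
  replace (n + m)%nat with (u + (n + m - u))%nat in Hs at 1 by lia.
  rewrite weighted_sum_closed in Hs.
  replace (u + (n + m - u))%nat with (n + m)%nat in Hs by lia. lra.
Qed.

(* Upper tail bound T_u(n) <= 2 c_n, from w_u(s) <= 1/(s+1). *)
Lemma weighted_tail_upper (u n : nat) : weighted_tail u n <= 2 * central n.
Proof.
  apply (le_up_to_central _ _ (wz_cert_bound u) (n + u)); [apply wz_cert_bound_nonneg|].
  intros M HM. replace M with (n + (M - n))%nat by lia.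
  rewrite (weighted_tail_split u n (M - n)) by lia.
  set (M' := (n + (M - n))%nat).
  pose proof (wz_cert_bounded u M'). pose proof (Rle_abs (wz_cert u M')).
  pose proof (central_pos M').
  assert (fsum (fun i => central (n + i) * weight u (n + i)) (M - n)
          <= 2 * (central n - central M')).
  { unfold M'. rewrite <- sum_central_first. apply fsum_le. intros i _.
    apply central_weight_upper. }
  nra.
Qed.

Lemma weighted_tail_lower (u n : nat) : (1 <= n)%nat ->
  2 * central n - 2/3 * (INR u * (INR u + 1)) * (central n / INR n) <= weighted_tail u n.
Proof.
  intros Hn.
  apply (le_up_to_central _ _ (wz_cert_bound u + 2) (n + u));
    [pose proof (wz_cert_bound_nonneg u); lra|].
  intros M HM. replace M with (n + (M - n))%nat by lia.
  rewrite (weighted_tail_split u n (M - n)) by lia.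
  set (M' := (n + (M - n))%nat).
  pose proof (wz_cert_bounded u M'). pose proof (Rle_abs (- wz_cert u M')) as HQ.
  rewrite Rabs_Ropp in HQ.
  pose proof (central_pos M').
  set (U := INR u * (INR u + 1)).
  assert (HU : 0 <= U) by (unfold U; pose proof (pos_INR u); nra).
  assert (2 * (central n - central M') - U * (2/3 * (central n / INR n))
          <= fsum (fun i => central (n + i) * weight u (n + i)) (M - n)).
  { pose proof (sum_central_second n (M - n) Hn).
    apply Rle_trans with
      (fsum (fun i => central (n + i) / (INR (n + i) + 1)
                      - U * (central (n + i) / (INR (n + i) + 1) ^ 2)) (M - n)).
    - rewrite fsum_minus, fsum_scal, sum_central_first. fold M'. nra.
    - apply fsum_le. intros i _. apply central_weight_lower. }
  nra.
Qed.
Definition cosh_coef (u : nat) : R := (alpha ^ 2) ^ u / INR (fact (2 * u)).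

Lemma alpha_pos : 0 < alpha.
Proof. unfold alpha. pose proof PI_RGT_0. lra. Qed.

Lemma cosh_coef_pos (u : nat) : 0 < cosh_coef u.
Proof.
  unfold cosh_coef. pose proof alpha_pos. apply Rdiv_lt_0_compat.
  - apply pow_lt, pow_lt. exact alpha_pos.
  - apply INR_fact_lt_0.
Qed.

Lemma cosh_coef_S (u : nat) :
  cosh_coef (S u) = cosh_coef u * alpha ^ 2 / ((2 * INR u + 1) * (2 * INR u + 2)).
Proof.
  unfold cosh_coef. replace (2 * S u)%nat with (S (S (2 * u))) by lia.
  rewrite !fact_simpl, !mult_INR.
  replace (INR (S (S (2 * u)))) with (2 * INR u + 2) by (rewrite !S_INR, mult_INR; simpl; ring).
  replace (INR (S (2 * u))) with (2 * INR u + 1) by (rewrite S_INR, mult_INR; simpl; ring).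
  pose proof (INR_fact_lt_0 (2 * u)). pose proof (pos_INR u). simpl pow.
  field. repeat split; lra.
Qed.

Lemma exp_series (x : R) :
  Un_cv (fun m => fsum (fun i => / INR (fact i) * x ^ i) (S m)) (exp x).
Proof.
  intros e He. destruct (proj2_sig (exist_exp x) e He) as [N HN].
  exists N. intros m Hm. rewrite <- sum_f_R0_fsum. apply HN. exact Hm.
Qed.

Lemma exp_even_odd (N : nat) :
  let E y := fsum (fun i => / INR (fact i) * y ^ i) (2 * N) in
  E alpha + E (- alpha) = 2 * fsum cosh_coef N /\
  E alpha - E (- alpha) = 2 * alpha * fsum (fun u => cosh_coef u / (2 * INR u + 1)) N.
Proof.
  intros E. unfold E. rewrite !fsum_pairs, <- !fsum_plus, <- !fsum_minus, <- !fsum_scal.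
  assert (Even : forall u, (- alpha) ^ (2 * u) = alpha ^ (2 * u)).
  { intros u. rewrite !pow_mult. f_equal. ring. }
  assert (Odd : forall u, (- alpha) ^ S (2 * u) = - alpha ^ S (2 * u)).
  { intros u. change ((- alpha) ^ S (2 * u)) with (- alpha * (- alpha) ^ (2 * u)).
    change (alpha ^ S (2 * u)) with (alpha * alpha ^ (2 * u)). rewrite Even. ring. }
  assert (Fact : forall u, INR (fact (S (2 * u))) = (2 * INR u + 1) * INR (fact (2 * u))).
  { intros u. rewrite fact_simpl, mult_INR, S_INR, mult_INR. simpl INR. ring. }
  pose proof alpha_pos.
  split; apply fsum_ext; intros u _; rewrite Even, Odd, Fact; unfold cosh_coef;
    rewrite <- pow_mult; simpl pow;
    pose proof (INR_fact_lt_0 (2 * u)); pose proof (pos_INR u); field; lra.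
Qed.

Lemma cv_const (c : R) : Un_cv (fun _ => c) c.
Proof. intros e He. exists O. intros. unfold Rdist. rewrite Rminus_diag, Rabs_R0. lra. Qed.

Lemma cv_scal (U : nat -> R) (l c : R) : Un_cv U l -> Un_cv (fun N => c * U N) (c * l).
Proof. intros H. apply CV_mult; [apply cv_const|exact H]. Qed.

Lemma cv_ext (U V : nat -> R) (l : R) : (forall N, U N = V N) -> Un_cv U l -> Un_cv V l.
Proof. intros H C e He. destruct (C e He) as [N HN]. exists N. intros. rewrite <- H. auto. Qed.

Lemma cv_even_subseq (U : nat -> R) (l : R) : Un_cv U l -> Un_cv (fun N => U (S (2 * N))) l.
Proof. intros H e He. destruct (H e He) as [N HN]. exists N. intros m Hm. apply HN. lia. Qed.

Lemma cosh_series : Un_cv (fun N => fsum cosh_coef (S N)) (cosh alpha).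
Proof.
  pose proof (cv_scal _ _ (/ 2) (cv_even_subseq _ _
                (CV_plus _ _ _ _ (exp_series alpha) (exp_series (- alpha))))) as H.
  unfold cosh. replace ((exp alpha + exp (- alpha)) / 2) with (/ 2 * (exp alpha + exp (- alpha)))
    by field.
  eapply cv_ext; [|exact H]. intros N. cbv beta.
  replace (S (S (2 * N))) with (2 * S N)%nat by lia.
  destruct (exp_even_odd (S N)) as [E _]. rewrite E. field.
Qed.

Lemma sinh_series :
  Un_cv (fun N => fsum (fun u => cosh_coef u / (2 * INR u + 1)) (S N)) (sinh alpha / alpha).
Proof.
  pose proof alpha_pos.
  pose proof (cv_scal _ _ (/ (2 * alpha)) (cv_even_subseq _ _
                (CV_minus _ _ _ _ (exp_series alpha) (exp_series (- alpha))))) as H1.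
  unfold sinh. replace ((exp alpha - exp (- alpha)) / 2 / alpha)
    with (/ (2 * alpha) * (exp alpha - exp (- alpha))) by (field; lra).
  eapply cv_ext; [|exact H1]. intros N. cbv beta.
  replace (S (S (2 * N))) with (2 * S N)%nat by lia.
  destruct (exp_even_odd (S N)) as [_ E]. rewrite E. field. lra.
Qed.

(* pi <= 68/21: the alternating series for pi/4 = 2 atan(1/3) + atan(1/7) is
   bounded by its first term 2/3 + 1/7. *)
Lemma PI_le : PI <= 68 / 21.
Proof.
  destruct (PI_2_3_7_ineq 0) as [_ H]. simpl in H.
  unfold tg_alt, PI_2_3_7_tg, Ratan_seq in H. simpl in H. lra.
Qed.

(* Hence alpha^2 <= (34/63)^2 < 0.2913. *)
Lemma alpha_sq_bounds : 0 < alpha ^ 2 <= 4624 / 15876.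
Proof.
  pose proof PI_le. pose proof PI_RGT_0. unfold alpha. split; [nra|].
  assert (PI ^ 2 <= (68 / 21) ^ 2) by (simpl; nra). simpl in *. lra.
Qed.

Lemma fsum_geometric_bound (f : nat -> R) (r : R) (N : nat) :
  (forall u, 0 <= f u) -> 0 <= r < 1 -> (forall u, (1 <= u)%nat -> f (S u) <= r * f u) ->
  fsum f (S N) <= f O + f 1%nat / (1 - r).
Proof.
  intros Hf Hr Hs. rewrite fsum_shift.
  set (G := fun N => fsum (fun i => f (S i)) N).
  assert (Rec : forall M, G (S M) <= f 1%nat + r * G M).
  { intros M. unfold G. rewrite fsum_shift, <- fsum_scal. apply Rplus_le_compat_l.
    apply fsum_le. intros. apply Hs. lia. }
  assert (Mono : forall M, G M <= G (S M))
    by (intros M; unfold G; simpl; pose proof (Hf (S M)); lra).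
  assert (G N * (1 - r) <= f 1%nat).
  { destruct N as [|N]; [unfold G; simpl; pose proof (Hf 1%nat); lra|].
    specialize (Rec N). specialize (Mono N). nra. }
  fold (G N). apply Rplus_le_compat_l. apply Rmult_le_reg_r with (1 - r); [lra|].
  unfold Rdiv. rewrite Rmult_assoc, Rinv_l by lra. lra.
Qed.

(* sum_u a_u <= 1 + (alpha^2/2)/(1 - alpha^2/12) <= 23/20. *)
Lemma cosh_partial_le (N : nat) : fsum cosh_coef (S N) <= 23 / 20.
Proof.
  pose proof alpha_sq_bounds.
  eapply Rle_trans.
  { apply (fsum_geometric_bound cosh_coef (alpha ^ 2 / 12)).
    - intros u. left. apply cosh_coef_pos.
    - lra.
    - intros u Hu. rewrite cosh_coef_S. pose proof (cosh_coef_pos u).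
      assert (1 <= INR u) by (apply (le_INR 1); lia).
      assert (12 <= (2 * INR u + 1) * (2 * INR u + 2)) by nra.
      apply Rmult_le_reg_r with ((2 * INR u + 1) * (2 * INR u + 2)); [nra|].
      replace (cosh_coef u * alpha ^ 2 / ((2 * INR u + 1) * (2 * INR u + 2))
               * ((2 * INR u + 1) * (2 * INR u + 2))) with (cosh_coef u * alpha ^ 2)
        by (field; nra).
      replace (alpha ^ 2 / 12 * cosh_coef u * ((2 * INR u + 1) * (2 * INR u + 2)))
        with (cosh_coef u * alpha ^ 2 * ((2 * INR u + 1) * (2 * INR u + 2) / 12)) by field.
      rewrite <- (Rmult_1_r (cosh_coef u * alpha ^ 2)) at 1.
      apply Rmult_le_compat_l; [apply Rmult_le_pos; lra|lra]. }
  assert (cosh_coef 0 = 1) by (unfold cosh_coef; simpl; field).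
  assert (cosh_coef 1 = alpha ^ 2 / 2) by (unfold cosh_coef; simpl; field).
  rewrite H0, H1. apply Rmult_le_reg_r with (1 - alpha ^ 2 / 12); [lra|].
  replace ((1 + alpha ^ 2 / 2 / (1 - alpha ^ 2 / 12)) * (1 - alpha ^ 2 / 12))
    with (1 - alpha ^ 2 / 12 + alpha ^ 2 / 2) by (field; lra).
  lra.
Qed.

Lemma cosh_alpha_bounds : 0 < cosh alpha <= 23 / 20.
Proof.
  split.
  - unfold cosh. pose proof (exp_pos alpha). pose proof (exp_pos (- alpha)). lra.
  - apply (Rle_cv_lim (Un := fun N => fsum cosh_coef (S N)) (Vn := fun _ => 23 / 20)).
    + apply cosh_partial_le.
    + apply cosh_series.
    + apply cv_const.
Qed.

(* The second moment sum_u u(u+1) a_u, which controls the lower tail estimate. *)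
Definition moment_term (u : nat) : R := INR u * (INR u + 1) * cosh_coef u.

(* sum_u u(u+1) a_u <= alpha^2/(1 - alpha^2/4) <= 63/200. *)
Lemma moment_partial_le (N : nat) : fsum moment_term (S N) <= 63 / 200.
Proof.
  pose proof alpha_sq_bounds.
  assert (Hp : forall u, 0 <= moment_term u).
  { intros u. unfold moment_term. pose proof (pos_INR u). pose proof (cosh_coef_pos u).
    apply Rmult_le_pos; nra. }
  eapply Rle_trans.
  { apply (fsum_geometric_bound moment_term (alpha ^ 2 / 4)); [exact Hp|lra|].
    intros u Hu. unfold moment_term. rewrite cosh_coef_S, S_INR.
    assert (1 <= INR u) by (apply (le_INR 1); lia). pose proof (cosh_coef_pos u).
    set (v := INR u) in *.
    replace ((v + 1) * (v + 1 + 1) * (cosh_coef u * alpha ^ 2 / ((2 * v + 1) * (2 * v + 2))))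
      with ((v * (v + 1) * cosh_coef u) * (alpha ^ 2 * (v + 2) / (v * (2 * v + 1) * (2 * v + 2))))
      by (field; lra).
    rewrite (Rmult_comm (alpha ^ 2 / 4)). apply Rmult_le_compat_l; [apply Rmult_le_pos; nra|].
    apply Rmult_le_reg_r with (v * (2 * v + 1) * (2 * v + 2)); [nra|].
    unfold Rdiv. rewrite Rmult_assoc, Rinv_l by nra.
    assert (4 * (v + 2) <= v * (2 * v + 1) * (2 * v + 2)) by nra. nra. }
  assert (moment_term 0 = 0) by (unfold moment_term; simpl; ring).
  assert (moment_term 1 = alpha ^ 2) by (unfold moment_term, cosh_coef; simpl; field).
  rewrite H0, H1. apply Rmult_le_reg_r with (1 - alpha ^ 2 / 4); [lra|].
  replace ((0 + alpha ^ 2 / (1 - alpha ^ 2 / 4)) * (1 - alpha ^ 2 / 4)) with (alpha ^ 2)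
    by (field; lra).
  lra.
Qed.
Lemma S4_outer (s : nat) :
  (-1) ^ s * rising (1/2 - INR s) (s + 1) = 1/2 * central s * INR (fact s).
Proof.
  rewrite Nat.add_1_r. induction s as [|s IH]; [simpl; field|].
  rewrite rising_front. replace (1/2 - INR (S s) + 1) with (1/2 - INR s) by (rewrite S_INR; ring).
  change ((-1) ^ S s) with (-1 * (-1) ^ s).
  replace (-1 * (-1) ^ s * ((1/2 - INR (S s)) * rising (1/2 - INR s) (S s)))
    with ((INR (S s) - 1/2) * ((-1) ^ s * rising (1/2 - INR s) (S s))) by ring.
  rewrite IH, central_S, fact_simpl, mult_INR, S_INR. pose proof (pos_INR s). field. lra.
Qed.

Lemma S4_inner (s u : nat) :
  (-1) ^ u * rising (- INR s) u * INR (fact (s + 1)) = hratio u s * INR (fact (s + u + 1)).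
Proof.
  induction u as [|u IH].
  - unfold hratio. simpl. rewrite Nat.add_0_r. field.
  - rewrite hratio_S. change ((-1) ^ S u) with (-1 * (-1) ^ u).
    change (rising (- INR s) (S u)) with (rising (- INR s) u * (- INR s + INR u)).
    replace (s + S u + 1)%nat with (S (s + u + 1)) by lia. rewrite fact_simpl, mult_INR.
    replace (INR (S (s + u + 1))) with (INR s + INR u + 2)
      by (rewrite S_INR, !plus_INR; simpl; ring).
    replace (-1 * (-1) ^ u * (rising (- INR s) u * (- INR s + INR u)) * INR (fact (s + 1)))
      with ((INR s - INR u) * ((-1) ^ u * rising (- INR s) u * INR (fact (s + 1)))) by ring.
    rewrite IH. pose proof (pos_INR s). pose proof (pos_INR u). field. lra.
Qed.

Lemma S4_summand (s u : nat) :
  (-1) ^ u * rising (- INR s) u / (INR (fact (s + u + 1)) * INR (fact (2 * u))) * (PI ^ 2 / 36) ^ u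
  = cosh_coef u * weight u s / INR (fact s).
Proof.
  pose proof (S4_inner s u) as H.
  replace (s + 1)%nat with (S s) in H by lia. rewrite fact_simpl, mult_INR, S_INR in H.
  pose proof (INR_fact_lt_0 s). pose proof (INR_fact_lt_0 (s + u + 1)).
  pose proof (INR_fact_lt_0 (2 * u)). pose proof (pos_INR s).
  assert (Hr : hratio u s = (-1) ^ u * rising (- INR s) u * ((INR s + 1) * INR (fact s))
                            / INR (fact (s + u + 1))) by (rewrite H; field; lra).
  replace (PI ^ 2 / 36) with (alpha ^ 2) by (unfold alpha; field).
  unfold cosh_coef, weight. rewrite Hr. field. repeat split; lra.
Qed.

(* Exchanging the order of summation:
   S_4(t) = 1/2 sum_u a_u A_u(t+1), where u may run up to any N >= t. *)
Lemma S4_weighted (t N : nat) : (t <= N)%nat ->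
  S4 t = 1/2 * fsum (fun u => cosh_coef u * weighted_sum u (S t)) (S N).
Proof.
  intros HN. unfold S4. rewrite sum_f_R0_fsum.
  rewrite (fsum_ext _ (fun s =>
    fsum (fun u => 1/2 * central s * (cosh_coef u * weight u s)) (S N))).
  2: { intros s Hs. rewrite sum_f_R0_fsum, S4_outer.
       rewrite (fsum_ext _ (fun u => cosh_coef u * weight u s / INR (fact s)))
         by (intros; apply S4_summand).
       rewrite (fsum_extend_zero _ (S s) (S N)) by
         (try lia; intros u Hu; rewrite weight_zero by lia; unfold Rdiv; ring).
       rewrite <- fsum_scal. apply fsum_ext. intros. pose proof (INR_fact_lt_0 s). field. lra. }
  rewrite fsum_swap, <- fsum_scal. apply fsum_ext. intros u _.
  unfold weighted_sum. rewrite <- !fsum_scal. apply fsum_ext. intros. ring.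
Qed.

(* Finite form of the main estimate: with c = c_{t+1}, the defect
   sum_{u<=N} a_u/(2u+1) - S_4(t) = 1/2 sum_{u<=N} a_u T_u(t+1) is squeezed by
   the tail bounds. *)
Lemma S4_defect_partial (t N : nat) : (1 <= t)%nat -> (t <= N)%nat ->
  central (S t) * fsum cosh_coef (S N) - central (S t) / (INR t + 1) * (21/200)
  <= fsum (fun u => cosh_coef u / (2 * INR u + 1)) (S N) - S4 t
  <= central (S t) * fsum cosh_coef (S N).
Proof.
  intros Ht HN. rewrite (S4_weighted t N HN).
  set (c := central (S t)). pose proof (central_pos (S t)) as Hc. fold c in Hc.
  pose proof (pos_INR t).
  replace (fsum (fun u => cosh_coef u / (2 * INR u + 1)) (S N)
           - 1/2 * fsum (fun u => cosh_coef u * weighted_sum u (S t)) (S N))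
    with (1/2 * fsum (fun u => cosh_coef u * weighted_tail u (S t)) (S N)).
  2: { rewrite <- !fsum_scal, <- fsum_minus. apply fsum_ext. intros k _.
       unfold weighted_tail. pose proof (pos_INR k). field. lra. }
  split.
  - pose proof (moment_partial_le N).
    apply Rle_trans
      with (c * fsum cosh_coef (S N) - 1/3 * (c / (INR t + 1)) * fsum moment_term (S N)).
    { assert (0 <= c / (INR t + 1))
        by (apply Rmult_le_pos; [lra|left; apply Rinv_0_lt_compat; lra]).
      nra. }
    replace (c * fsum cosh_coef (S N) - 1/3 * (c / (INR t + 1)) * fsum moment_term (S N))
      with (1/2 * fsum (fun u => cosh_coef u *
              (2 * c - 2/3 * (INR u * (INR u + 1)) * (c / INR (S t)))) (S N)).
    2: { rewrite S_INR, <- !fsum_scal, <- fsum_minus. apply fsum_ext. intros.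
         unfold moment_term. field. lra. }
    apply Rmult_le_compat_l; [lra|]. apply fsum_le. intros u _.
    apply Rmult_le_compat_l; [left; apply cosh_coef_pos|]. apply weighted_tail_lower. lia.
  - replace (c * fsum cosh_coef (S N)) with (1/2 * fsum (fun u => cosh_coef u * (2 * c)) (S N))
      by (rewrite <- !fsum_scal; apply fsum_ext; intros; field).
    apply Rmult_le_compat_l; [lra|]. apply fsum_le. intros u _.
    apply Rmult_le_compat_l; [left; apply cosh_coef_pos|]. apply weighted_tail_upper.
Qed.

Lemma S4_defect (t : nat) : (1 <= t)%nat ->
  central (S t) * cosh alpha - central (S t) / (INR t + 1) * (21/200)
  <= sinh alpha / alpha - S4 t <= central (S t) * cosh alpha.
Proof.
  intros Ht. set (c := central (S t)).
  assert (Hcosh : Un_cv (fun N => c * fsum cosh_coef (S (N + t))) (c * cosh alpha))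
    by (apply cv_scal, (CV_shift' (fun N => fsum cosh_coef (S N))), cosh_series).
  assert (Hsinh : Un_cv (fun N => fsum (fun u => cosh_coef u / (2 * INR u + 1)) (S (N + t)) - S4 t)
                        (sinh alpha / alpha - S4 t))
    by (apply CV_minus; [apply (CV_shift' (fun N => fsum _ (S N))), sinh_series|apply cv_const]).
  split.
  - eapply Rle_cv_lim; [| |exact Hsinh].
    + intros N. apply (S4_defect_partial t (N + t)); lia.
    + apply CV_minus; [exact Hcosh|apply cv_const].
  - eapply Rle_cv_lim; [|exact Hsinh|exact Hcosh].
    intros N. apply (S4_defect_partial t (N + t)); lia.
Qed.

Lemma neg_one_pow_sq (t : nat) : (-1) ^ t * (-1) ^ t = 1.
Proof. rewrite <- pow_add. replace (t + t)%nat with (2 * t)%nat by lia. apply pow_1_even. Qed.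

Lemma gbinom_neg_three_halves (t : nat) :
  gbinom (-3/2) t = (-1) ^ t * (2 * (INR t + 1) * central (S t)).
Proof.
  assert (Hf : (-1) ^ t * falling (-3/2) t = 2 * (INR t + 1) * central (S t) * INR (fact t)).
  { induction t as [|t IH]; [simpl; field|].
    change (falling (-3/2) (S t)) with (falling (-3/2) t * (-3/2 - INR t)).
    change ((-1) ^ S t) with (-1 * (-1) ^ t).
    replace (-1 * (-1) ^ t * (falling (-3/2) t * (-3/2 - INR t)))
      with ((INR t + 3/2) * ((-1) ^ t * falling (-3/2) t)) by field.
    rewrite IH, (central_S (S t)), fact_simpl, mult_INR, !S_INR.
    pose proof (pos_INR t). field. lra. }
  unfold gbinom. pose proof (INR_fact_lt_0 t).
  replace (falling (-3/2) t) with ((-1) ^ t * ((-1) ^ t * falling (-3/2) t))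
    by (rewrite <- Rmult_assoc, neg_one_pow_sq; ring).
  rewrite Hf. field. lra.
Qed.

(* The elementary inequality to which the theorem reduces, with T = t >= 1,
   h = cosh(alpha) and Y = (sinh(alpha)/alpha - S_4(t)) / |binom(-3/2, t)|. *)
Lemma final_inequality (T h Y : R) : 1 <= T -> 0 < h <= 23/20 ->
  h / (2 * (T + 1)) - 21/400 / (T + 1) ^ 2 <= Y <= h / (2 * (T + 1)) ->
  - (1 / (3 * T ^ 2)) < - Y + h / (2 * T) /\ - Y + h / (2 * T) < 13 / (20 * T ^ 2).
Proof.
  intros HT Hh HY. split.
  - assert (h / (2 * (T + 1)) < h / (2 * T)).
    { apply Rmult_lt_compat_l; [lra|]. apply Rinv_lt_contravar; nra. }
    assert (0 < 1 / (3 * T ^ 2)) by (apply Rdiv_lt_0_compat; nra).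
    lra.
  - assert (Gap : 13 / (20 * T ^ 2) - (h / (2 * T) - h / (2 * (T + 1)) + 21/400 / (T + 1) ^ 2)
                  = (78 * (T + 1) ^ 2 - 60 * h * T * (T + 1) - 63/10 * T ^ 2)
                    / (120 * T ^ 2 * (T + 1) ^ 2)) by (field; lra).
    assert (0 < (78 * (T + 1) ^ 2 - 60 * h * T * (T + 1) - 63/10 * T ^ 2)
                / (120 * T ^ 2 * (T + 1) ^ 2)).
    { apply Rdiv_lt_0_compat; [nra|].
      assert (0 < T ^ 2 * (T + 1) ^ 2) by (apply Rmult_lt_0_compat; nra). nra. }
    lra.
Qed.

Theorem mainTheorem13 : forall t : nat, (1 <= t)%nat ->
  let B := gbinom (-3/2) t in
  let E := S4 t / ((-1) ^ t * B)
           - ((-1) ^ t / B) * (sinh alpha / alpha)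
           + cosh alpha / (2 * INR t) in
  - (1 / (3 * INR t ^ 2)) < E /\ E < 13 / (20 * INR t ^ 2).
Proof.
  intros t Ht B E.
  set (c := central (S t)). set (D := 2 * (INR t + 1) * c).
  set (X := sinh alpha / alpha - S4 t).
  assert (HT : 1 <= INR t) by (apply (le_INR 1); exact Ht).
  assert (Hc : 0 < c) by apply central_pos.
  assert (HD : 0 < D) by (unfold D; nra).
  (* Since B = (-1)^t D with D > 0, E = cosh(alpha)/(2t) - X/D. *)
  assert (HE : E = - (X / D) + cosh alpha / (2 * INR t)).
  { assert (Hp : (-1) ^ t <> 0) by (apply pow_nonzero; lra).
    unfold E, B. rewrite gbinom_neg_three_halves. fold c D. unfold X.
    rewrite <- Rmult_assoc, neg_one_pow_sq. pose proof alpha_pos. field. repeat split; lra. }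
  rewrite HE. apply final_inequality; [exact HT|exact cosh_alpha_bounds|].
  destruct (S4_defect t Ht) as [Hlo Hhi]. fold c X in Hlo, Hhi.
  replace (cosh alpha / (2 * (INR t + 1))) with (c * cosh alpha / D) by (unfold D; field; lra).
  replace (c * cosh alpha / D - 21/400 / (INR t + 1) ^ 2)
    with ((c * cosh alpha - c / (INR t + 1) * (21/200)) / D) by (unfold D; field; lra).
  split; apply Rmult_le_compat_r; try (left; apply Rinv_0_lt_compat; exact HD); assumption.
Qed.
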